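(* Let $\mathbb{K}\in\{\mathbb{R},\mathbb{C}\}$ and let $\mathcal{X}$ be a topological $\mathbb{K}$-vector space whose topological dual $\mathcal{X}^{\ast}$ separates the points of $\mathcal{X}$. Then the set $\mathbf{B}(\mathcal{X}^{\ast})$ is a closed subset of $\mathbf{F}(\mathcal{X}^{\ast})$ in the weak*-Hausdorff hypertopology, it is convex and path-connected, and it is a connected component (maximal connected subset) of $\mathbf{F}(\mathcal{X}^{\ast})$.
   Context: Topological vector spaces are Hausdorff. $\mathcal{X}^{\ast}$ carries the weak* topology. $\mathbf{F}(\mathcal{X}^{\ast})$ is the set of nonempty weak*-closed subsets of $\mathcal{X}^{\ast}$, endowed with the weak*-Hausdorff hypertopology: the topology generated by the extended pseudometrics $d_H^{(A)}(F,\tilde F)=\max\{\sup_{\sigma\in F}\inf_{\tilde\sigma\in\tilde F}|(\sigma-\tilde\sigma)(A)|,\ \sup_{\tilde\sigma\in\tilde F}\inf_{\sigma\in F}|(\sigma-\tilde\sigma)(A)|\}\in[0,\infty]$, $A\in\mathcal{X}$. $\mathbf{B}(\mathcal{X}^{\ast})$ is the set of nonempty weak*-closed subsets $B\subseteq\mathcal{X}^{\ast}$ that are bounded in the weak* topology, i.e. $\sup_{\sigma\in B}|\sigma(A)|<\infty$ for every $A\in\mathcal{X}$. Convexity of $\mathbf{B}(\mathcal{X}^{\ast})$ means: for $B_0,B_1\in\mathbf{B}(\mathcal{X}^{\ast})$ and $\lambda\in[0,1]$, the (weak*-closure of the) set $\{(1-\lambda)\sigma_0+\lambda\sigma_1:\sigma_0\in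 B_0,\sigma_1\in B_1\}$ belongs to $\mathbf{B}(\mathcal{X}^{\ast})$. *)

From HB Require Import structures.
From mathcomp Require Import all_boot all_algebra.
From mathcomp Require Import all_classical all_reals all_analysis.
From mathcomp.real_closed Require Import complex.

Set Implicit Arguments.
Unset Strict Implicit.
Unset Printing Implicit Defensive.

Import GRing.Theory Num.Theory numFieldTopology.Exports.
Local Open Scope classical_set_scope.
Local Open Scope ring_scope.

Section Hyper.
(* R : the real numbers; K : the scalar field (R or R[i]);
   absK : K -> R the modulus |.| on K. *)
Variables (R : realType) (K : numFieldType) (absK : K -> R).
Variable (X : topologicalLmodType K).

Definition dual : set (X -> K) :=
  [set s | (forall (a : K) (x y : X), s (a *: x + y) = a * s x + s y)
           /\ continuous s].

(* The weak-star topology on Xdual is the subspace topology of {ptws X -> K}. *)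
Definition wstar_closure (S : set (X -> K)) : set (X -> K) :=
  closure (S : set (prod_topology (fun _ : X => K))) `&` dual.

Definition wstar_closed (S : set (X -> K)) : Prop :=
  S `<=` dual /\ wstar_closure S `<=` S.

Definition Fset : set (set (X -> K)) :=
  [set S | S !=set0 /\ wstar_closed S].

Definition wstar_bounded (S : set (X -> K)) : Prop :=
  forall A : X, exists M : R, forall s, S s -> absK (s A) <= M.

Definition Bset : set (set (X -> K)) :=
  [set S | Fset S /\ wstar_bounded S].

Definition dH (A : X) (S T : set (X -> K)) : \bar R :=
  maxe
    (ereal_sup [set ereal_inf [set (absK (s A - t A))%:E | t in T] | s in S])
    (ereal_sup [set ereal_inf [set (absK (s A - t A))%:E | s in S] | t in T]).

Definition hyperspace : Type := (fun _ : K -> R => set (X -> K)) absK.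

HB.instance Definition _ := gen_eqMixin hyperspace.
HB.instance Definition _ := gen_choiceMixin hyperspace.

(* indices of the subbasic open balls: (centre A of the pseudometric,
   centre S of the ball, radius e) *)
Definition ball_index : Type := (X * hyperspace * R)%type.
HB.instance Definition _ := gen_eqMixin ball_index.
HB.instance Definition _ := gen_choiceMixin ball_index.
HB.instance Definition _ := isPointed.Build ball_index (0, set0, 0).

Definition hball (i : ball_index) : set hyperspace :=
  [set T | (dH i.1.1 i.1.2 T < (i.2)%:E)%E].

(* The topology generated by the family of extended pseudometrics d_H^{(A)}:
   the open balls {T | d_H^{(A)}(S,T) < e}, e > 0, form a subbase. *)
HB.instance Definition _ :=
  isSubBaseTopological.Build hyperspace [set i : ball_index | 0 < i.2] hball.

Definition convex_comb (l : K) (S0 S1 : set (X -> K)) : set (X -> K) :=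
  [set s | exists s0 s1, [/\ S0 s0, S1 s1 &
     s = (fun x => (1 - l) * s0 x + l * s1 x)]].

Definition Bset_convex : Prop :=
  forall (S0 S1 : set (X -> K)) (l : K), Bset S0 -> Bset S1 -> 0 <= l <= 1 ->
    Bset (wstar_closure (convex_comb l S0 S1)).

End Hyper.

Arguments dual {K} X.
Arguments wstar_closure {K X} S.
Arguments wstar_closed {K X} S.
Arguments Fset {K} X.
Arguments hyperspace {R K} absK X.
Arguments wstar_bounded {R K} absK {X} S.
Arguments Bset {R K} absK X.
Arguments Bset_convex {R K} absK X.

Definition path_connected_set (R : realType) (T : topologicalType) (A : set T) :=
  forall a b, A a -> A b ->
    exists g : R -> T, [/\ {within `[0, 1], continuous g},
                          g 0 = a, g 1 = b & g @` `[0, 1] `<=` A].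

Definition prop34_concl (R : realType) (K : numFieldType) (absK : K -> R)
    (X : topologicalLmodType K) : Prop :=
  [/\ closed (Bset absK X : set (subspace (Fset X : set (hyperspace absK X)))),
      Bset_convex absK X,
      path_connected_set R (Bset absK X : set (hyperspace absK X)) &
      exists2 S0, Bset absK X S0 &
        connected_component (Fset X : set (hyperspace absK X)) S0 = Bset absK X].

Definition prop34_hyp (K : numFieldType) (X : topologicalLmodType K) : Prop :=
  hausdorff_space X /\
  (forall x y : X, x <> y -> exists2 s, dual X s & s x <> s y).

From HB Require Import structures.
From mathcomp Require Import all_boot all_algebra.
From mathcomp Require Import all_classical all_reals all_analysis.
From mathcomp.real_closed Require Import complex.
From mathcomp Require Import all_order finmap lra ring.

(* For a fixed A, d_H^(A) is an extended pseudometric on nonempty sets, and a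
   set is bounded at A as soon as it lies at finite d_H^(A)-distance from a
   bounded set.  Hence boundedness passes to limits (B is closed), and the sets
   at finite d_H^(A)-distance from a fixed one form a clopen part of F, so the
   connected component of a bounded set consists of bounded sets.  Conversely,
   t |-> closure((1 - t) B0 + t B1) is Lipschitz for every d_H^(A), with
   constant sup|B0(A)| + sup|B1(A)|; these segments make B path-connected,
   hence connected, so B is the whole component of any of its members. *)

Set Implicit Arguments.
Unset Strict Implicit.
Unset Printing Implicit Defensive.
Import Order.TTheory GRing.Theory Num.Theory numFieldTopology.Exports.
Local Open Scope classical_set_scope.
Local Open Scope ring_scope.

Lemma connected_sub_locally_constant (T : topologicalType) (F C : set T)
    (P : T -> Prop) (N : T -> set T) x0 :
  (forall x, F x -> open (N x)) -> (forall x, F x -> N x x) ->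
  (forall x y, F x -> F y -> N x y -> (P x <-> P y)) ->
  C `<=` F -> connected C -> C x0 -> P x0 -> C `<=` P.
Proof.
move=> oN Nxx NP CF Cc Cx0 Px0.
have CP : C `&` P = C.
  apply: Cc; first by exists x0.
  - exists (\bigcup_(x in F `&` P) N x).
      by apply: bigcup_open => x [Fx _]; exact: oN.
    apply/seteqP; split=> [y [Cy Py]|y [Cy [x [Fx Px] Nxy]]]; split=> //.
      by exists y; [split=> //; exact: CF | exact/Nxx/CF].
    exact/(NP x y Fx (CF y Cy) Nxy).
  - exists (~` \bigcup_(x in F `&` ~` P) N x).
      by rewrite closedC; apply: bigcup_open => x [Fx _]; exact: oN.
    apply/seteqP; split=> [y [Cy Py]|y [Cy nN]]; split=> //.
      by move=> [x [Fx nPx] Nxy]; apply/nPx/(NP x y Fx (CF y Cy) Nxy).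
    apply: contrapT => nPy; apply: nN.
    by exists y; [split=> //; exact: CF | exact/Nxx/CF].
by move=> y; rewrite -CP => -[].
Qed.

Lemma path_connected_set_connected (R : realType) (T : topologicalType)
    (A : set T) :
  path_connected_set R A -> connected A.
Proof.
have [-> _|/set0P [a Aa] pA] := eqVneq A set0; first exact: connected0.
have itv0 : `[(0 : R), 1]%classic 0 by rewrite /= in_itv /= lexx ler01.
have itv1 : `[(0 : R), 1]%classic 1 by rewrite /= in_itv /= lexx ler01.
pose paths := [set g : R -> T |
  [/\ {within `[0, 1], continuous g}, g 0 = a & g @` `[0, 1] `<=` A]].
have -> : A = \bigcup_(g in paths) (g @` `[0, 1]).
  apply/seteqP; split=> [b Ab|b [g [_ _ gA] gb]]; last exact: gA.
  have [g [gc ga gb gA]] := pA a b Aa Ab.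
  by exists g => //; exists 1.
apply: bigcup_connected.
  by exists a => g [_ ga _]; exists 0.
move=> g [gc _ _]; apply: connected_continuous_connected => //.
exact: segment_connected.
Qed.

Section Hyperspace.
Variables (R : realType) (K : numFieldType) (absK : K -> R).
Variable X : topologicalLmodType K.
Hypothesis absK0 : absK 0 = 0.
Hypothesis absKN : forall x, absK (- x) = absK x.
Hypothesis absKD : forall x y, absK (x + y) <= absK x + absK y.

Lemma absK_ge0 x : 0 <= absK x.
Proof. by have := absKD x (- x); rewrite subrr absK0 absKN; lra. Qed.

Lemma absK_distC x y : absK (x - y) = absK (y - x).
Proof. by rewrite -absKN opprB. Qed.

Lemma absK_dist_triangle x y z : absK (x - z) <= absK (x - y) + absK (y - z).
Proof. by have := absKD (x - y) (y - z); rewrite addrA subrK. Qed.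

Lemma absK_le_dist x y : absK x <= absK (x - y) + absK y.
Proof. by have := absKD (x - y) y; rewrite subrK. Qed.

Local Notation d A s t := (absK (s A - t A)).
Implicit Types (S T U : set (X -> K)) (A : X).

Definition excess A S T : \bar R :=
  ereal_sup [set ereal_inf [set (d A s t)%:E | t in T] | s in S].

Lemma dHE A S T : dH absK A S T = maxe (excess A S T) (excess A T S).
Proof.
rewrite /dH /excess; congr Order.max; congr ereal_sup; apply: eq_imagel => t _.
by congr ereal_inf; apply: eq_imagel => s _; rewrite absK_distC.
Qed.

Lemma dHC A S T : dH absK A S T = dH absK A T S.
Proof. by rewrite !dHE maxC. Qed.

Lemma excess_le_dH A S T : (excess A S T <= dH absK A S T)%E.
Proof. by rewrite dHE le_max lexx. Qed.

Lemma inf_le_excess A S T s :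
  S s -> (ereal_inf [set (d A s t)%:E | t in T] <= excess A S T)%E.
Proof. by move=> Ss; apply: ereal_sup_ubound; exists s. Qed.

Lemma excess_ge0 A S T : S !=set0 -> (0 <= excess A S T)%E.
Proof.
move=> [s Ss]; apply: le_trans (inf_le_excess A T Ss).
by apply: le_ereal_inf_tmp => _ [t _ <-]; rewrite lee_fin absK_ge0.
Qed.

Lemma excess_le A S T (r : R) :
  (forall s, S s -> forall e, 0 < e -> exists2 t, T t & d A s t <= r + e) ->
  (excess A S T <= r%:E)%E.
Proof.
move=> approx; apply: ge_ereal_sup => _ [s Ss <-]; apply/lee_addgt0Pr => e e0.
have [t Tt le] := approx s Ss e e0.
by apply: ge_ereal_inf; exists (d A s t)%:E; [exists t | rewrite -EFinD lee_fin].
Qed.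

Lemma excess_triangle A S T U : T !=set0 ->
  (excess A S U <= excess A S T + excess A T U)%E.
Proof.
move=> T0; apply: ge_ereal_sup => _ [s Ss <-].
have ST0 : (0 <= excess A S T)%E by apply: excess_ge0; exists s.
case eTU : (excess A T U) (excess_ge0 A U T0) => [r| |] // _; last first.
  by rewrite addey ?leey // gt_eqF // (lt_le_trans _ ST0) ?ltNy0.
apply: le_trans (leeD2r _ (inf_le_excess A T Ss)); rewrite -leeBlDr //.
apply: le_ereal_inf_tmp => _ [t Tt <-]; rewrite leeBlDr //.
apply/lee_addgt0Pr => e e0.
have : (ereal_inf [set (d A t u)%:E | u in U] < (r + e)%:E)%E.
  by apply: le_lt_trans (inf_le_excess A U Tt) _; rewrite eTU lte_fin ltrDl.
move=> /ereal_inf_lt [_ [u Uu <-]]; rewrite lte_fin => ltu.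
apply: ge_ereal_inf; exists (d A s u)%:E; first by exists u.
rewrite -!EFinD lee_fin; apply: le_trans (absK_dist_triangle _ (t A) _) _.
by rewrite -addrA lerD2l ltW.
Qed.

Lemma dH_refl A S : (dH absK A S S <= 0)%E.
Proof.
rewrite dHE maxxx; apply: ge_ereal_sup => _ [s Ss <-].
by apply: ge_ereal_inf; exists 0%:E => //; exists s => //; rewrite subrr absK0.
Qed.

Lemma dH_triangle A S T U : T !=set0 ->
  (dH absK A S U <= dH absK A S T + dH absK A T U)%E.
Proof.
move=> T0; rewrite [leLHS]dHE ge_max.
rewrite (le_trans (excess_triangle A S U T0)) ?leeD ?excess_le_dH //=.
rewrite (le_trans (excess_triangle A U S T0)) // addeC.
by rewrite leeD // -dHC excess_le_dH.
Qed.

Lemma dH_lt_approx A S T (e : R) s : (dH absK A S T < e%:E)%E -> S s ->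
  exists2 t, T t & d A s t < e.
Proof.
move=> lt Ss.
have : (ereal_inf [set (d A s t)%:E | t in T] < e%:E)%E.
  exact: le_lt_trans (inf_le_excess A T Ss) (le_lt_trans (excess_le_dH _ _ _) lt).
by move=> /ereal_inf_lt [_ [t Tt <-]]; rewrite lte_fin; exists t.
Qed.

Lemma bounded_at_dH_lt A S T (M e : R) :
  (forall t, T t -> absK (t A) <= M) -> (dH absK A S T < e%:E)%E ->
  forall s, S s -> absK (s A) <= M + e.
Proof.
move=> bT lt s Ss; have [t Tt lt_st] := dH_lt_approx lt Ss.
by have := absK_le_dist (s A) (t A); have := bT t Tt; lra.
Qed.

Lemma hball_open (i : ball_index absK X) :
  0 < i.2 -> open (hball i : set (hyperspace absK X)).
Proof.
move=> i0; exists [set hball i]; last by rewrite bigcup_set1.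
by move=> _ ->; apply: finI_from1.
Qed.

Lemma hball_center A (G : hyperspace absK X) : hball (A, G, 1) G.
Proof. by apply: le_lt_trans (dH_refl A G) _; rewrite lte_fin ltr01. Qed.

Lemma hball1_open A (G : hyperspace absK X) :
  open (hball (A, G, 1) : set (hyperspace absK X)).
Proof. by apply: hball_open; rewrite /= ltr01. Qed.

Lemma nbhs_hyperspace (G : hyperspace absK X) (U : set (hyperspace absK X)) :
  nbhs G U ->
  exists D : {fset ball_index absK X},
  [/\ {subset D <= [set i : ball_index absK X | 0 < i.2]},
      (forall i, i \in D -> hball i G) &
      \bigcap_(i in [set` D]) hball i `<=` U].
Proof.
rewrite nbhsE => -[B [[D' sD' eB] BG] BU].
move: BG; rewrite -eB => -[C /[dup] D'C /sD' [D sD eC] CG].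
exists D; split => //.
- by move=> j jD; move: CG; rewrite -eC; apply; rewrite /= jD.
- by rewrite eC => H CH; apply: BU; rewrite -eB; exists C.
Qed.

Lemma hyperspace_continuousP (T : topologicalType) (f : T -> hyperspace absK X) t :
  (forall A S (e : R), 0 < e -> (dH absK A S (f t) < e%:E)%E ->
     \forall u \near t, (dH absK A S (f u) < e%:E)%E) ->
  {for t, continuous f}.
Proof.
move=> near_ball U /nbhs_hyperspace [D [Dpos Dt DU]].
apply: (@filterS _ _ _ (\bigcap_(i in [set` D]) (f @^-1` hball i))).
  by move=> u fu; apply: DU => i iD; exact: fu.
apply: filter_bigI => -[[A S] e] iD; apply: near_ball; last exact: Dt.
by have := Dpos _ iD; rewrite in_setE.
Qed.

Lemma hyperspace_lipschitz_continuous (f : R -> hyperspace absK X) :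
  (forall t, f t !=set0) ->
  (forall A, exists C : R, forall t s,
     (dH absK A (f t) (f s) <= (`|t - s| * C)%:E)%E) ->
  continuous f.
Proof.
move=> f0 lip t; apply: hyperspace_continuousP => A S e e0 lt.
have [C lipC] := lip A.
have [r le_r lt_re] : exists2 r : R, (dH absK A S (f t) <= r%:E)%E & r < e.
  case: (dH _ _ _ _) lt => [r|//|_]; first by rewrite lte_fin; exists r.
  by exists 0; rewrite ?leNye.
have C1 : 0 < `|C| + 1 by rewrite ltr_wpDl.
apply/nbhs_ballP; exists ((e - r) / (`|C| + 1)) => [|s].
  by apply: divr_gt0; rewrite ?subr_gt0.
rewrite -ball_normE /= => ts.
apply: le_lt_trans (dH_triangle A S (f s) (f0 t)) _.
apply: le_lt_trans (leeD le_r (lipC t s)) _; rewrite -EFinD lte_fin.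
have : `|t - s| * (`|C| + 1) < e - r by rewrite -ltr_pdivlMr.
have : `|t - s| * C <= `|t - s| * (`|C| + 1).
  by rewrite ler_wpM2l // (le_trans (ler_norm C)) // lerDl.
lra.
Qed.

Lemma Bset_sub_Fset : Bset absK X `<=` Fset X.
Proof. by move=> B []. Qed.

Lemma closed_Bset :
  closed (Bset absK X : set (subspace (Fset X : set (hyperspace absK X)))).
Proof.
rewrite /closed closure_subspaceW; last exact: Bset_sub_Fset.
move=> F [clF FF]; split => // A.
have [G [BG FG]] :=
  clF _ (open_nbhs_nbhs (conj (hball1_open A F) (hball_center A F))).
have [M bM] := BG.2 A; exists (M + 1).
exact: bounded_at_dH_lt bM FG.
Qed.

Lemma dH_finite_hball A (S0 G G' : hyperspace absK X) :
  Fset X G -> Fset X G' -> hball (A, G, 1) G' ->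
  ((dH absK A S0 G < +oo)%E <-> (dH absK A S0 G' < +oo)%E).
Proof.
move=> [G0 _] [G'0 _] GG'; have fin : (dH absK A G G' < +oo)%E.
  by apply: lt_trans GG' _; exact: ltry.
split=> fin0.
  exact: le_lt_trans (dH_triangle A S0 G' G0) (lte_add_pinfty fin0 fin).
by apply: le_lt_trans (dH_triangle A S0 G G'0) (lte_add_pinfty fin0 _); rewrite dHC.
Qed.

Lemma connected_component_Bset (S0 : hyperspace absK X) : Bset absK X S0 ->
  connected_component (Fset X : set (hyperspace absK X)) S0 `<=` Bset absK X.
Proof.
move=> BS0 F CF; split; first exact: connected_component_sub CF.
move=> A; have fin : (dH absK A S0 F < +oo)%E.
  apply: (@connected_sub_locally_constant (hyperspace absK X) (Fset X)
    (connected_component (Fset X : set (hyperspace absK X)) S0)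
    (fun G => dH absK A S0 G < +oo)%E (fun G => hball (A, G, 1)) S0
    _ _ _ _ _ _ _ F CF).
  - by move=> G _; exact: hball1_open.
  - by move=> G _; exact: hball_center.
  - by move=> G G'; exact: dH_finite_hball.
  - exact: connected_component_sub.
  - exact: component_connected.
  - exact: connected_component_refl BS0.1.
  - exact: le_lt_trans (dH_refl A S0) (ltry 0).
have [r lt_r] : exists r : R, (dH absK A F S0 < r%:E)%E.
  rewrite dHC; case: (dH _ _ _ _) fin => [r _|//|_].
    by exists (r + 1); rewrite lte_fin ltrDl.
  by exists 0; rewrite ltNyr.
have [M bM] := BS0.2 A; exists (M + r).
exact: bounded_at_dH_lt bM lt_r.
Qed.

Hypothesis absK_cont :
  forall (x : K) (e : R), 0 < e -> \forall y \near x, absK (x - y) < e.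

Local Notation PT := (prod_topology (fun _ : X => K)).

Lemma nbhs_ptws_eval (f : X -> K) A (e : R) : 0 < e ->
  nbhs (f : PT) [set g : X -> K | d A f g < e].
Proof.
move=> e0; apply: (@proj_continuous X (fun _ => K) A f
  [set y | absK (f A - y) < e]).
exact: absK_cont.
Qed.

Lemma closed_bounded_at A (M : R) :
  closed ([set f : X -> K | absK (f A) <= M] : set PT).
Proof.
rewrite -openC openE => f /= /negP; rewrite -ltNge => Mf.
have e0 : 0 < absK (f A) - M by rewrite subr_gt0.
apply: (@filterS _ _ (@nbhs_filter PT f) _ _ _ (nbhs_ptws_eval f A e0)).
move=> g /= lt; apply/negP; rewrite -ltNge.
by have := absK_le_dist (f A) (g A); lra.
Qed.

Lemma Bset_wstar_closure S : S `<=` dual X -> S !=set0 ->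
  wstar_bounded absK S -> Bset absK X (wstar_closure S).
Proof.
move=> SD [s Ss] Sb; split; [split|].
- by exists s; split; [exact: subset_closure | exact: SD].
- split=> [f []//|f [clf df]]; split => //.
  have := closureS (@subIsetl _ (closure (S : set PT)) (dual X)) clf.
  exact: (@closed_closure PT S).
- move=> A; have [M bM] := Sb A; exists M => f [clf _].
  have SM : (S : set PT) `<=` [set g : X -> K | absK (g A) <= M] by exact: bM.
  by have := closureS SM clf; exact: closed_bounded_at.
Qed.

Hypothesis absKM : forall x y, absK (x * y) = absK x * absK y.

Lemma dual_comb (l : K) s0 s1 : dual X s0 -> dual X s1 ->
  dual X (fun x => (1 - l) * s0 x + l * s1 x).
Proof.
move=> [lin0 c0] [lin1 c1]; split=> [a x y|x].
  by rewrite lin0 lin1; ring.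
apply: (@continuousD K K^o X (fun x => (1 - l) * s0 x) (fun x => l * s1 x)).
  by apply: (@continuousM K X (fun=> 1 - l) s0); [exact: cst_continuous|exact: c0].
by apply: (@continuousM K X (fun=> l) s1); [exact: cst_continuous|exact: c1].
Qed.

Lemma Bset_convex_comb (l : K) S0 S1 : Bset absK X S0 -> Bset absK X S1 ->
  Bset absK X (wstar_closure (convex_comb l S0 S1)).
Proof.
move=> [[[s0 S0s0] [D0 _]] b0] [[[s1 S1s1] [D1 _]] b1].
apply: Bset_wstar_closure.
- by move=> _ [t0 [t1 [/D0 ? /D1 ? ->]]]; exact: dual_comb.
- by exists (fun x => (1 - l) * s0 x + l * s1 x); exists s0, s1.
- move=> A; have [M0 h0] := b0 A; have [M1 h1] := b1 A.
  exists (absK (1 - l) * M0 + absK l * M1) => _ [t0 [t1 [/h0 ? /h1 ? ->]]].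
  apply: le_trans (absKD _ _) _; rewrite !absKM.
  by rewrite lerD // ler_wpM2l ?absK_ge0.
Qed.

Lemma convex_Bset : Bset_convex absK X.
Proof. by move=> S0 S1 l B0 B1 _; exact: Bset_convex_comb. Qed.

Variable realK : R -> K.
Hypothesis realK0 : realK 0 = 0.
Hypothesis realK1 : realK 1 = 1.
Hypothesis absK_realKB : forall a b, absK (realK a - realK b) = `|a - b|.

Definition hsegment S0 S1 (t : R) : hyperspace absK X :=
  wstar_closure (convex_comb (realK t) S0 S1).

Lemma wstar_closure_id B : Fset X B -> wstar_closure B = B.
Proof.
move=> [_ [D cl]]; apply/seteqP; split => // f Bf.
by split; [exact: subset_closure | exact: D].
Qed.

Lemma convex_comb0 S0 S1 : S1 !=set0 -> convex_comb 0 S0 S1 = S0.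
Proof.
move=> [s1 S1s1]; have comb0 s t : (fun x => (1 - 0) * s x + 0 * t x) = s.
  by rewrite funeqE => x; rewrite subr0 mul1r mul0r addr0.
apply/seteqP; split=> [_ [s0 [t1 [S0s0 _ ->]]]|s0 S0s0]; first by rewrite comb0.
by exists s0, s1; rewrite comb0.
Qed.

Lemma convex_comb1 S0 S1 : S0 !=set0 -> convex_comb 1 S0 S1 = S1.
Proof.
move=> [s0 S0s0]; have comb1 s t : (fun x => (1 - 1) * s x + 1 * t x) = t.
  by rewrite funeqE => x; rewrite subrr mul1r mul0r add0r.
apply/seteqP; split=> [_ [t0 [s1 [_ S1s1 ->]]]|s1 S1s1]; first by rewrite comb1.
by exists s0, s1; rewrite comb1.
Qed.

Lemma hsegment0 S0 S1 : Fset X S0 -> S1 !=set0 -> hsegment S0 S1 0 = S0.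
Proof.
by move=> F0 S1n; rewrite /hsegment realK0 convex_comb0 // wstar_closure_id.
Qed.

Lemma hsegment1 S0 S1 : S0 !=set0 -> Fset X S1 -> hsegment S0 S1 1 = S1.
Proof.
by move=> S0n F1; rewrite /hsegment realK1 convex_comb1 // wstar_closure_id.
Qed.

Lemma excess_hsegment_le S0 S1 A M0 M1 : S0 `<=` dual X -> S1 `<=` dual X ->
  (forall s, S0 s -> absK (s A) <= M0) -> (forall s, S1 s -> absK (s A) <= M1) ->
  forall t s,
  (excess A (hsegment S0 S1 t) (hsegment S0 S1 s) <= (`|t - s| * (M0 + M1))%:E)%E.
Proof.
move=> D0 D1 b0 b1 t s; apply: excess_le => u [clu _] e e0.
have [_ [[s0 [s1 [h0 h1 ->]]] /= lt]] := clu _ (nbhs_ptws_eval u A e0).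
exists (fun x => (1 - realK s) * s0 x + realK s * s1 x).
  split; first by apply: subset_closure; exists s0, s1.
  exact: dual_comb (D0 _ h0) (D1 _ h1).
have := absK_dist_triangle (u A) ((1 - realK t) * s0 A + realK t * s1 A)
                                 ((1 - realK s) * s0 A + realK s * s1 A).
have -> : (1 - realK t) * s0 A + realK t * s1 A
          - ((1 - realK s) * s0 A + realK s * s1 A)
        = (realK s - realK t) * (s0 A - s1 A) by ring.
rewrite absKM absK_realKB distrC.
have : absK (s0 A - s1 A) <= M0 + M1.
  apply: le_trans (absKD _ _) _; rewrite absKN.
  by rewrite lerD ?b0 ?b1.
move=> /(ler_wpM2l (normr_ge0 (t - s))).
lra.
Qed.

Lemma dH_hsegment_le S0 S1 A M0 M1 : S0 `<=` dual X -> S1 `<=` dual X ->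
  (forall s, S0 s -> absK (s A) <= M0) -> (forall s, S1 s -> absK (s A) <= M1) ->
  forall t s,
  (dH absK A (hsegment S0 S1 t) (hsegment S0 S1 s) <= (`|t - s| * (M0 + M1))%:E)%E.
Proof.
move=> D0 D1 b0 b1 t s; rewrite dHE ge_max (excess_hsegment_le D0 D1 b0 b1).
by rewrite distrC (excess_hsegment_le D0 D1 b0 b1).
Qed.

Lemma Bset_hsegment S0 S1 t : Bset absK X S0 -> Bset absK X S1 ->
  Bset absK X (hsegment S0 S1 t).
Proof. exact: Bset_convex_comb. Qed.

Lemma hsegment_continuous S0 S1 : Bset absK X S0 -> Bset absK X S1 ->
  continuous (hsegment S0 S1).
Proof.
move=> B0 B1; apply: hyperspace_lipschitz_continuous.
  by move=> t; have [[]] := Bset_hsegment t B0 B1.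
move=> A; have [M0 b0] := B0.2 A; have [M1 b1] := B1.2 A.
exists (M0 + M1); apply: dH_hsegment_le b0 b1.
- by case: B0 => -[_ []].
- by case: B1 => -[_ []].
Qed.

Lemma path_connected_Bset :
  path_connected_set R (Bset absK X : set (hyperspace absK X)).
Proof.
move=> B0 B1 BB0 BB1; exists (hsegment B0 B1); split.
- exact/continuous_subspaceT/hsegment_continuous.
- exact: hsegment0 BB0.1 BB1.1.1.
- exact: hsegment1 BB0.1.1 BB1.1.
- by move=> _ [t _ <-]; exact: Bset_hsegment.
Qed.

Lemma Bset_zero : Bset absK X (wstar_closure [set (fun _ : X => 0 : K)]).
Proof.
apply: Bset_wstar_closure.
- move=> _ ->; split; first by move=> a x y; rewrite mulr0 addr0.
  exact: cst_continuous.
- by exists (fun _ => 0).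
- by move=> A; exists 0 => _ ->; rewrite absK0.
Qed.

Lemma prop34_concl_generic : prop34_concl absK X.
Proof.
split; [exact: closed_Bset | exact: convex_Bset | exact: path_connected_Bset |].
exists (wstar_closure [set (fun _ : X => 0 : K)]); first exact: Bset_zero.
apply/seteqP; split; first exact/connected_component_Bset/Bset_zero.
apply: connected_component_max; [exact: Bset_zero | exact: Bset_sub_Fset |].
exact/path_connected_set_connected/path_connected_Bset.
Qed.

End Hyperspace.

Lemma prop34_concl_real (R : realType) (X : topologicalLmodType R) :
  prop34_concl (fun x : R => `|x|) X.
Proof.
apply: (@prop34_concl_generic R R (fun x : R => `|x|) X _ _ _ _ _ id) => //.
- exact: normr0.
- exact: normrN.
- exact: ler_normD.
- by move=> x e e0; apply/nbhs_ballP; exists e => // y; rewrite -ball_normE.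
- exact: normrM.
Qed.

Lemma prop34_concl_complex (R : realType) (X : topologicalLmodType R[i]) :
  prop34_concl (@Normc.normc R) X.
Proof.
apply: (@prop34_concl_generic R R[i] (@Normc.normc R) X _ _ _ _ _
  (fun t => t%:C)%C) => //.
- exact: Normc.normc0.
- exact: normcN.
- exact: le_normcD.
- move=> x e e0; apply/nbhs_ballP; exists (e%:C)%C; first by rewrite /= ltcR.
  move=> y; rewrite /ball /=.
  have -> : `|x - y| = ((Normc.normc (x - y))%:C)%C by case: (x - y).
  by rewrite ltcR.
- exact: Normc.normcM.
- by move=> a b; rewrite -rmorphB /Normc.normc /= expr0n /= addr0 sqrtr_sqr.
Qed.

Theorem proposition3p4 (R : realType) :
  (forall X : topologicalLmodType R,
      prop34_hyp X -> prop34_concl (fun x : R => Num.norm x) X) /\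
  (forall X : topologicalLmodType R[i],
      prop34_hyp X -> prop34_concl (@Normc.normc R) X).
Proof.
by split=> X _; [exact: prop34_concl_real | exact: prop34_concl_complex].
Qed.
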